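(* For every network $\mathcal N$, the rate region $\mathcal R^{\mathcal N}$ is a convex set.
   Context: A network is a triple $\mathcal N=(\mathcal L,\mathcal I,D_{\mathcal L})$ where $\mathcal L$ is a finite nonempty set (of links); $\mathcal I=(\mathcal I(l))_{l\in\mathcal L}$ is the collision profile, each $\mathcal I(l)$ being a collection of nonempty subsets of $\mathcal L$; and $D_{\mathcal L}$ assigns an integer $D_{\mathcal L}(l,l')$ to every pair $(l,l')$ with $l'\in\phi$ for some $\phi\in\mathcal I(l)$. A schedule is a map $S:\mathcal L\times\mathbb Z\to\{0,1\}$. $S(l,t)$ has a collision if there exists $\phi\in\mathcal I(l)$ such that $S(l',t+D_{\mathcal L}(l,l'))=1$ for every $l'\in\phi$; otherwise it is collision free. For a schedule $S$ and link $l$, $R_S(l)=\lim_{T\to\infty}\frac1T\sum_{t=0}^{T-1}\iota\big(S(l,t)=1\text{ and }S(l,t)\text{ is collision free}\big)$ when the limit exists; if it exists for all $l$, $R_S=(R_S(l))_{l}$ is the rate vector of $S$. Comparisons $\succcurlyeq$ are entrywise and $R-\epsilon$ subtracts $\epsilon$ from each entry. A nonnegative vector $R\in[0,\infty)^{\mathcal L}$ is achievable if for every $\epsilon>0$ there is a schedule $S$ whose rate vector exists and satisfies $R_S\succcurlyeq R-\epsilon$; the rate region $\mathcal R^{\mathcal N}$ is the set of all achievable nonnegative vectors. *)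

From mathcomp Require Import all_boot.
From Stdlib Require Import Reals ZArith.
Set Implicit Arguments. Unset Strict Implicit. Unset Printing Implicit Defensive.

(* A network: links L : finType (nonempty), collision profile I (each I l a
   collection of nonempty subsets of L), delays D : L -> L -> Z.
   D is given as a total function; only its values on pairs (l,l') with
   l' in some phi in I l are ever used. *)
Definition schedule (L : finType) := L -> Z -> bool.

Definition collision (L : finType) (I : L -> {set {set L}}) (D : L -> L -> Z)
  (S : schedule L) (l : L) (t : Z) : bool :=
  [exists phi in I l, [forall l' in phi, S l' (t + D l l')%Z]].

Definition nsucc (L : finType) (I : L -> {set {set L}}) (D : L -> L -> Z)
  (S : schedule L) (l : L) (T : nat) : nat :=
  \sum_(t < T) (S l (Z.of_nat t) && ~~ collision I D S l (Z.of_nat t)).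

Definition link_rate (L : finType) (I : L -> {set {set L}}) (D : L -> L -> Z)
  (S : schedule L) (l : L) (r : R) : Prop :=
  Un_cv (fun T => (INR (nsucc I D S l T) / INR T)%R) r.

Definition rate_region (L : finType) (I : L -> {set {set L}}) (D : L -> L -> Z)
  (Rv : L -> R) : Prop :=
  (forall l, (0 <= Rv l)%R) /\
  forall eps : R, (0 < eps)%R ->
    exists (S : schedule L) (RS : L -> R),
      (forall l, link_rate I D S l (RS l)) /\
      (forall l, (Rv l - eps <= RS l)%R).

From mathcomp Require Import all_boot.
From Stdlib Require Import Reals ZArith.
From Stdlib Require Import Lia Lra Psatz.
From Coquelicot Require Rcomplements.
From mathcomp Require Import zify.
Import ssrnat.

(* Given schedules S1, S2 nearly achieving R1 and R2, and a in [0, 1], cut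
   time into frames of T active slots followed by G silent guard slots, with
   G larger than every delay.  Frame k replays the first T slots of S1 when
   k mod q < p and of S2 otherwise, where p / q approximates a.  Because of
   the guards, a transmission in one frame never meets interference from
   another frame, so each frame collects at least the successes of the
   replayed schedule.  The resulting schedule is periodic, hence has a rate
   on every link (its average over one period), and this rate is at least
   T / (T + G) * (p/q x1 + (1 - p/q) x2) with x_i the rate of S_i over T
   slots.  Choosing q, then T large, makes this within 3 e of
   a R1 + (1 - a) R2. *)

Lemma frame_decomp (k x B : Z) : (0 <= x < B)%Z ->
  ((k * B + x) / B = k /\ (k * B + x) mod B = x)%Z.
Proof.
move=> Hx; split.
- by rewrite Z.add_comm Z.div_add ?Z.div_small; lia.
- by rewrite Z.add_comm Z.mod_add ?Z.mod_small; lia.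
Qed.

(* With frames of T active slots followed by G guard slots, a shift by
   |d| < G from an active slot that lands on an active slot again stays in
   the same frame: guard slots separate consecutive frames. *)
Lemma guarded_shift {k r d T G : Z} : (0 <= r < T)%Z -> (Z.abs d < G)%Z ->
  ((k * (T + G) + r + d) mod (T + G) < T)%Z ->
  ((k * (T + G) + r + d) / (T + G) = k /\
   (k * (T + G) + r + d) mod (T + G) = r + d)%Z.
Proof.
move=> Hr Hd Hact; case: (Z_lt_le_dec (r + d) 0) => Hsign.
- have Eprev : (k * (T + G) + r + d = (k - 1) * (T + G) + (r + d + (T + G)))%Z
    by ring.
  have [_ Emod] := frame_decomp (k - 1) (r + d + (T + G)) (T + G) ltac:(lia).
  by move: Hact; rewrite Eprev Emod; lia.
- by rewrite -Z.add_assoc; apply: frame_decomp; lia.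
Qed.

Lemma nsucc_le (L : finType) (I : L -> {set {set L}}) (D : L -> L -> Z)
  (S : schedule L) l n : nsucc I D S l n <= n.
Proof.
rewrite /nsucc -[leqRHS]card_ord -sum1_card.
by apply: leq_sum => t _; exact: leq_b1.
Qed.

Definition empirical_rate {L : finType} (I : L -> {set {set L}})
  (D : L -> L -> Z) (S : schedule L) (l : L) (n : nat) : R :=
  (INR (nsucc I D S l n) / INR n)%R.

Lemma nat_ratio_bounds {k n : nat} : 0 < n -> k <= n -> (0 <= INR k / INR n <= 1)%R.
Proof.
move=> n_pos k_le_n; have nR_pos : (0 < INR n)%R by apply: lt_0_INR; apply/ltP.
split; first exact: Rmult_le_pos (pos_INR _) (Rlt_le _ _ (Rinv_0_lt_compat _ nR_pos)).
by apply/(Rcomplements.Rdiv_le_1 _ _ nR_pos); apply: le_INR; apply/leP.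
Qed.

Lemma empirical_rate_bounds {L : finType} (I : L -> {set {set L}})
  (D : L -> L -> Z) (S : schedule L) (l : L) {n : nat} : 0 < n ->
  (0 <= empirical_rate I D S l n <= 1)%R.
Proof. by move=> n_pos; apply: nat_ratio_bounds => //; exact: nsucc_le. Qed.

Section AdditivelyPeriodic.

Variables (g : nat -> nat) (P : nat).
Hypothesis P_pos : 0 < P.
Hypothesis g_additive : forall m, g (P + m) = g P + g m.
Hypothesis g_sublinear : forall m, g m <= m.

Lemma additive_periodic_mul k s : g (k * P + s) = k * g P + g s.
Proof.
elim: k => [|k IH]; first by rewrite !mul0n !add0n.
by rewrite mulSn -addnA g_additive IH mulSn addnA.
Qed.

(* After n slots the average is within P / n of the period average: the
   incomplete last period is the only discrepancy. *)
Lemma periodic_ratio_error n : 0 < n ->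
  (Rabs (INR (g n) / INR n - INR (g P) / INR P) <= INR P / INR n)%R.
Proof.
move=> n_pos; set k := n %/ P; set s := n %% P.
have s_lt_P : s < P := ltn_pmod n P_pos.
have EnR : INR n = (INR k * INR P + INR s)%R.
  by rewrite {1}(divn_eq n P) plus_INR mult_INR.
have EgR : INR (g n) = (INR k * INR (g P) + INR (g s))%R.
  by rewrite {1}(divn_eq n P) additive_periodic_mul plus_INR mult_INR.
have PR_pos : (0 < INR P)%R by apply: lt_0_INR; apply/ltP.
have nR_pos : (0 < INR n)%R by apply: lt_0_INR; apply/ltP.
have sR_le : (INR s <= INR P)%R by apply: le_INR; apply/leP; exact: ltnW.
have gsR_le : (INR (g s) <= INR s)%R by apply: le_INR; apply/leP.
have gPR_le : (INR (g P) <= INR P)%R by apply: le_INR; apply/leP.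
have gs_pos := pos_INR (g s); have gP_pos := pos_INR (g P).
have discrepancy : (INR (g n) / INR n - INR (g P) / INR P =
    (INR (g s) * INR P - INR s * INR (g P)) / (INR n * INR P))%R.
  by rewrite EgR EnR; field; rewrite -EnR; lra.
rewrite discrepancy Rcomplements.Rabs_div; last nra.
rewrite (Rabs_pos_eq (INR n * INR P)); last nra.
apply/Rcomplements.Rle_div_l; first nra.
have -> : (INR P / INR n * (INR n * INR P) = INR P * INR P)%R by field; lra.
by apply: Rabs_le; split; nra.
Qed.

Lemma periodic_ratio_cv :
  Un_cv (fun n => INR (g n) / INR n)%R (INR (g P) / INR P)%R.
Proof.
move=> eps eps_pos; have [N HN] := INR_unbounded (INR P / eps).
exists N.+1 => n /leP n_ge.
have nR_gt : (INR N < INR n)%R by apply: lt_INR; apply/ltP.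
have nR_pos : (0 < INR n)%R by have := pos_INR N; lra.
have n_pos : 0 < n := leq_ltn_trans (leq0n N) n_ge.
rewrite /Rdist; apply: (Rle_lt_trans _ _ _ (periodic_ratio_error n n_pos)).
(* P / n < eps since n > P / eps *)
apply/Rcomplements.Rlt_div_l => //; rewrite Rmult_comm; apply/Rcomplements.Rlt_div_l; lra.
Qed.

End AdditivelyPeriodic.

Lemma rational_approx {a e : R} : (0 <= a <= 1)%R -> (0 < e)%R ->
  exists p q : nat, 0 < q /\ p <= q /\ (Rabs (a - INR p / INR q) <= e)%R.
Proof.
move=> Ha e_pos; have [q Hq] := INR_unbounded (/ e).
have inv_e_pos : (0 < / e)%R by apply: Rinv_0_lt_compat.
have qR_pos : (0 < INR q)%R by lra.
set x := (a * INR q)%R; have [up_gt up_le] := archimed x.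
have x_range : (0 <= x <= INR q)%R by rewrite /x; split; nra.
have up_pos : (0 < up x)%Z by apply: lt_IZR; lra.
set p := Z.to_nat (up x - 1).
have pR : INR p = (IZR (up x) - 1)%R.
  by rewrite /p INR_IZR_INZ Z2Nat.id ?minus_IZR //; lia.
exists p, q; split; first by apply/ltP; apply: INR_lt; rewrite INR_0.
split; first by apply/leP; apply: INR_le; rewrite pR; lra.
have e_q_large : (1 < e * INR q)%R.
  have e_inv : (e * / e = 1)%R by field; lra.
  nra.
have -> : (a - INR p / INR q = (x - INR p) / INR q)%R by rewrite /x; field; lra.
rewrite Rcomplements.Rabs_div; last lra.
rewrite (Rabs_pos_eq (INR q)); last lra.
apply/Rcomplements.Rle_div_l => //.
suff : (Rabs (x - INR p) <= 1)%R by lra.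
by apply: Rabs_le; rewrite pR; lra.
Qed.

Lemma uniform_threshold {L : finType} (Prop_at : L -> nat -> Prop) :
  (forall l, exists N, forall n, N <= n -> Prop_at l n) ->
  exists N, forall l n, N <= n -> Prop_at l n.
Proof.
move=> eventually.
suff [N HN] : exists N, forall l n, l \in enum L -> N <= n -> Prop_at l n.
  by exists N => l n; apply: HN; rewrite mem_enum.
elim: (enum L) => [|l0 s [N IH]]; first by exists 0.
have [N0 H0] := eventually l0.
exists (maxn N0 N) => l n; rewrite inE => /orP [/eqP -> | l_in] n_ge.
- by apply: H0; apply: leq_trans n_ge; exact: leq_maxl.
- by apply: IH l_in _; apply: leq_trans n_ge; exact: leq_maxr.
Qed.

Lemma achievable_empirical {L : finType} {I : L -> {set {set L}}}
  {D : L -> L -> Z} {Rv : L -> R} {e : R} :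
  rate_region I D Rv -> (0 < e)%R ->
  exists (S : schedule L) (N : nat),
    forall l n, N <= n -> (Rv l - e <= empirical_rate I D S l n)%R.
Proof.
move=> [_ achievable] e_pos.
have [S [RS [S_rate S_close]]] := achievable (e / 2)%R ltac:(lra).
have /uniform_threshold [N HN] : forall l, exists N, forall n, N <= n ->
    (Rv l - e <= empirical_rate I D S l n)%R.
  move=> l; have [N HN] := S_rate l (e / 2)%R ltac:(lra).
  exists N => n /leP /HN close.
  by rewrite /empirical_rate; have [_ +] := Rabs_def2 _ _ close; have := S_close l; lra.
by exists S, N.
Qed.

Lemma delay_bound {L : finType} (D : L -> L -> Z) :
  exists G : nat, forall l l', (Z.abs (D l l') < Z.of_nat G)%Z.
Proof.
exists (\max_(l : L) \max_(l' : L) Z.abs_nat (D l l')).+1 => l l'.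
have inner := leq_bigmax (F := fun l' => Z.abs_nat (D l l')) l'.
have outer := leq_bigmax (F := fun l => \max_(l' : L) Z.abs_nat (D l l')) l.
by rewrite -Zabs2Nat.id_abs; lia.
Qed.

Lemma long_frame (N : nat) (c e : R) : (0 < e)%R ->
  exists T : nat, 0 < T /\ N <= T /\ (c <= e * INR T)%R.
Proof.
move=> e_pos; have [T0 HT0] := INR_unbounded (c / e).
exists (maxn (maxn T0 N) 1); split; first by rewrite leq_maxr.
split; first by rewrite (leq_trans (leq_maxr T0 N)) // leq_maxl.
have T0_le : (INR T0 <= INR (maxn (maxn T0 N) 1))%R.
  by apply: le_INR; apply/leP; rewrite (leq_trans (leq_maxl T0 N)) // leq_maxl.
have : (c / e * e = c)%R by field; lra.
nra.
Qed.

(* The loss of time sharing: approximating a by b within e, the rates r_i by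
   the frame rates x_i within e, and paying a guard overhead G <= e T costs at
   most 3 e against the convex combination a r1 + (1 - a) r2. *)
Lemma time_sharing_loss {a b x1 x2 r1 r2 T G e : R} :
  (0 <= a <= 1)%R -> (Rabs (a - b) <= e)%R -> (0 <= b <= 1)%R ->
  (0 <= x1 <= 1)%R -> (0 <= x2 <= 1)%R -> (r1 - e <= x1)%R -> (r2 - e <= x2)%R ->
  (0 < T)%R -> (0 <= G)%R -> (G <= e * T)%R ->
  (a * r1 + (1 - a) * r2 - 3 * e <= T / (T + G) * (b * x1 + (1 - b) * x2))%R.
Proof.
move=> Ha Hab Hb Hx1 Hx2 close1 close2 T_pos G_nonneg guard_small.
have ab_le : (a - b <= e)%R by have := RRle_abs (a - b); lra.
have ba_le : (b - a <= e)%R.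
  by rewrite Rabs_minus_sym in Hab; have := RRle_abs (b - a); lra.
set y := (b * x1 + (1 - b) * x2)%R.
have y_range : (0 <= y <= 1)%R by rewrite /y; nra.
have mixture_close : (a * x1 + (1 - a) * x2 - e <= y)%R by rewrite /y; nra.
have guard_loss : (y - e <= T / (T + G) * y)%R.
  rewrite -Rmult_div_swap Rmult_comm; apply/Rcomplements.Rle_div_r; first lra.
  nra.
nra.
Qed.

Section TimeSharing.

Variables (L : finType) (S1 S2 : schedule L) (p q : nat).

Definition frame_schedule (k : Z) : schedule L :=
  if (k mod Z.of_nat q <? Z.of_nat p)%Z then S1 else S2.

Lemma frame_schedule_small (j : nat) : j < q ->
  frame_schedule (Z.of_nat j) = if j < p then S1 else S2.
Proof.
move=> Hj; rewrite /frame_schedule Z.mod_small; last lia.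
case: (ltnP j p) => Hjp.
- by rewrite (proj2 (Z.ltb_lt _ _)) //; lia.
- by rewrite (proj2 (Z.ltb_ge _ _)) //; lia.
Qed.

Variables (I : L -> {set {set L}}) (D : L -> L -> Z).

Lemma sum_frame_schedules l n : p <= q ->
  \sum_(j < q) nsucc I D (frame_schedule (Z.of_nat j)) l n =
  p * nsucc I D S1 l n + (q - p) * nsucc I D S2 l n.
Proof.
move=> Hpq.
rewrite -(big_mkord xpredT (fun j => nsucc I D (frame_schedule (Z.of_nat j)) l n)).
rewrite (big_cat_nat (leq0n p) Hpq) /=.
rewrite (eq_big_nat _ _ (F2 := fun _ => nsucc I D S1 l n)); last first.
  by move=> j /andP [_ Hjp]; rewrite frame_schedule_small ?Hjp //; lia.
rewrite [X in _ + X](eq_big_nat _ _ (F2 := fun _ => nsucc I D S2 l n)); last first.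
  by move=> j /andP [Hpj Hjq]; rewrite frame_schedule_small // ltnNge Hpj.
by rewrite !sum_nat_const_nat subn0.
Qed.

Variables (T G : nat).

Let B := Z.of_nat (T + G).

Definition timeshare : schedule L := fun l t =>
  ((t mod B <? Z.of_nat T)%Z && frame_schedule (t / B)%Z l (t mod B)%Z).

Hypothesis T_pos : 0 < T.

Lemma timeshare_active k r l : (0 <= r < Z.of_nat T)%Z ->
  timeshare l (k * B + r)%Z = frame_schedule k l r.
Proof.
move=> Hr; have [Ediv Emod] := frame_decomp k r B ltac:(rewrite /B; lia).
by rewrite /timeshare Ediv Emod (proj2 (Z.ltb_lt _ _)) //; lia.
Qed.

Hypothesis guard_exceeds_delays : forall l l', (Z.abs (D l l') < Z.of_nat G)%Z.

(* A collision of the time-sharing schedule at an active slot of frame k is a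
   collision of the schedule replayed in that frame: every interferer it sees
   lies in an active slot of the same frame. *)
Lemma timeshare_collision {k r : Z} {l : L} : (0 <= r < Z.of_nat T)%Z ->
  collision I D timeshare l (k * B + r)%Z -> collision I D (frame_schedule k) l r.
Proof.
move=> Hr /existsP [phi /andP [phi_in /forallP all_active]].
apply/existsP; exists phi; rewrite phi_in /=; apply/forallP => l'.
apply/implyP => l'_in; move: (implyP (all_active l') l'_in).
rewrite /timeshare => /andP [/Z.ltb_lt in_active Hl'].
have EB : B = (Z.of_nat T + Z.of_nat G)%Z by rewrite /B; lia.
rewrite EB in in_active Hl'.
have [Ediv Emod] :=
  guarded_shift Hr (guard_exceeds_delays l l') in_active.
by rewrite Ediv Emod in Hl'.
Qed.

Lemma nsucc_timeshare_frames l k :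
  \sum_(j < k) nsucc I D (frame_schedule (Z.of_nat j)) l T <=
  nsucc I D timeshare l (k * (T + G)).
Proof.
elim: k => [|k IH]; first by rewrite big_ord0.
rewrite big_ord_recr /= /nsucc mulSnr big_split_ord /=.
apply: leq_add; first exact: IH.
rewrite big_split_ord /=; apply: leq_trans (leq_addr _ _).
apply: leq_sum => r _.
have Hr : (0 <= Z.of_nat r < Z.of_nat T)%Z by have := ltn_ord r; lia.
have -> : Z.of_nat (k * (T + G) + r) = (Z.of_nat k * B + Z.of_nat r)%Z
  by rewrite /B; lia.
rewrite timeshare_active //.
case: (frame_schedule (Z.of_nat k) l (Z.of_nat r)) => //=.
case Hcoll: (collision I D timeshare l _); last by rewrite leq_b1.
by rewrite (timeshare_collision Hr Hcoll).
Qed.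

Hypothesis q_pos : 0 < q.

Lemma timeshare_periodic l t : timeshare l (t + Z.of_nat q * B)%Z = timeshare l t.
Proof.
have B_neq0 : B <> 0%Z by rewrite /B; lia.
have q_neq0 : Z.of_nat q <> 0%Z by lia.
have frame_index : ((t / B + Z.of_nat q) mod Z.of_nat q = (t / B) mod Z.of_nat q)%Z.
  by rewrite -Z.add_mod_idemp_r // Z.mod_same // Z.add_0_r.
by rewrite /timeshare /frame_schedule Z.mod_add // Z.div_add // frame_index.
Qed.

Lemma collision_timeshare_periodic l t :
  collision I D timeshare l (t + Z.of_nat q * B)%Z = collision I D timeshare l t.
Proof.
apply: eq_existsb => phi; congr (_ && _).
apply: eq_forallb => l'; congr (_ ==> _).
have -> : (t + Z.of_nat q * B + D l l' = t + D l l' + Z.of_nat q * B)%Z by ring.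
by rewrite timeshare_periodic.
Qed.

Lemma nsucc_timeshare_additive l m :
  nsucc I D timeshare l (q * (T + G) + m) =
  nsucc I D timeshare l (q * (T + G)) + nsucc I D timeshare l m.
Proof.
rewrite {1}/nsucc big_split_ord /=; congr (_ + _).
apply: eq_bigr => t _.
have -> : Z.of_nat (q * (T + G) + t) = (Z.of_nat t + Z.of_nat q * B)%Z
  by rewrite /B; lia.
by rewrite timeshare_periodic collision_timeshare_periodic.
Qed.

Lemma timeshare_count l : p <= q ->
  p * nsucc I D S1 l T + (q - p) * nsucc I D S2 l T <=
  nsucc I D timeshare l (q * (T + G)).
Proof. by move=> Hpq; rewrite -sum_frame_schedules //; exact: nsucc_timeshare_frames. Qed.

Lemma timeshare_link_rate l :
  link_rate I D timeshare l (empirical_rate I D timeshare l (q * (T + G))).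
Proof.
apply: periodic_ratio_cv.
- by rewrite muln_gt0 q_pos addn_gt0 T_pos.
- exact: nsucc_timeshare_additive.
- exact: nsucc_le.
Qed.

Lemma timeshare_rate_lower l : p <= q ->
  (INR T / (INR T + INR G) *
     (INR p / INR q * empirical_rate I D S1 l T +
      (1 - INR p / INR q) * empirical_rate I D S2 l T) <=
   empirical_rate I D timeshare l (q * (T + G)))%R.
Proof.
move=> p_le_q.
have count := le_INR _ _ (leP (timeshare_count l p_le_q)).
have period_pos : (0 < INR (q * (T + G)))%R.
  by apply: lt_0_INR; apply/ltP; rewrite muln_gt0 q_pos addn_gt0 T_pos.
have TR_pos : (0 < INR T)%R by apply: lt_0_INR; apply/ltP.
have qR_pos : (0 < INR q)%R by apply: lt_0_INR; apply/ltP.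
have G_nonneg := pos_INR G.
rewrite /empirical_rate; apply/(Rcomplements.Rle_div_r _ _ _ period_pos).
apply: (Rle_trans _ _ _ _ count); apply: Req_le.
rewrite plus_INR !mult_INR (minus_INR _ _ (leP p_le_q)) plus_INR.
by field; repeat split; lra.
Qed.

End TimeSharing.

Arguments timeshare {L}.
Arguments timeshare_rate_lower {L S1 S2 p q I D T G}.

Theorem lemma1 (L : finType) (HL : (0 < #|L|)%nat)
  (I : L -> {set {set L}})
  (HI : forall l phi, phi \in I l -> phi != set0)
  (D : L -> L -> Z) :
  forall (R1 R2 : L -> R) (a : R),
    rate_region I D R1 -> rate_region I D R2 ->
    (0 <= a <= 1)%R ->
    rate_region I D (fun l => a * R1 l + (1 - a) * R2 l)%R.
Proof.
move=> R1 R2 a R1_in R2_in Ha; split.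
  by move=> l; have := R1_in.1 l; have := R2_in.1 l; nra.
move=> eps eps_pos; set e := (eps / 3)%R; have e_pos : (0 < e)%R by rewrite /e; lra.
have [S1 [N1 fit1]] := achievable_empirical R1_in e_pos.
have [S2 [N2 fit2]] := achievable_empirical R2_in e_pos.
have [G guard] := delay_bound D.
have [p [q [q_pos [p_le_q a_approx]]]] := rational_approx Ha e_pos.
have [T [T_pos [N_le_T guard_small]]] := long_frame (maxn N1 N2) (INR G) e e_pos.
have TR_pos : (0 < INR T)%R by apply: lt_0_INR; apply/ltP.
set Q := timeshare S1 S2 p q T G.
exists Q, (fun l => empirical_rate I D Q l (q * (T + G))); split.
  by move=> l; exact: timeshare_link_rate.
move=> l; apply: (Rle_trans _ _ _ _ (timeshare_rate_lower T_pos guard q_pos l p_le_q)).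
have loss := time_sharing_loss Ha a_approx (nat_ratio_bounds q_pos p_le_q)
  (empirical_rate_bounds I D S1 l T_pos) (empirical_rate_bounds I D S2 l T_pos)
  (fit1 l T (leq_trans (leq_maxl N1 N2) N_le_T))
  (fit2 l T (leq_trans (leq_maxr N1 N2) N_le_T))
  TR_pos (pos_INR G) guard_small.
by rewrite /e in loss; lra.
Qed.
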